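(* Let $\Omega\subseteq\mathbb{R}^n$ be open and let $f\in\mathbb{A}(\Omega)$. If $f$ is H-continuous then $f$ is D-continuous, and if $f$ is D-continuous then $f$ is S-continuous.
   Context: $\overline{\mathbb{R}}=\mathbb{R}\cup\{\pm\infty\}$ and $\mathbb{I}\overline{\mathbb{R}}=\{[\underline a,\overline a]:\underline a,\overline a\in\overline{\mathbb{R}},\ \underline a\le\overline a\}$, with $a\in\overline{\mathbb{R}}$ identified with $[a,a]$. $\mathbb{A}(\Omega)$ is the set of all functions $f:\Omega\to\mathbb{I}\overline{\mathbb{R}}$, written $f=[\underline f,\overline f]$. $B_\delta(x)=\{y\in\Omega:\|x-y\|<\delta\}$. For a dense subset $D\subseteq\Omega$ and $f\in\mathbb{A}(D)$ define $I(D,\Omega,f)(x)=\sup_{\delta>0}\inf\{z\in f(y):y\in B_\delta(x)\cap D\}$, $S(D,\Omega,f)(x)=\inf_{\delta>0}\sup\{z\in f(y):y\in B_\delta(x)\cap D\}$, and $F(D,\Omega,f)(x)=[I(D,\Omega,f)(x),S(D,\Omega,f)(x)]$ for $x\in\Omega$; when $D=\Omega$ write $I(f),S(f),F(f)$. A function $f\in\mathbb{A}(\Omega)$ is S-continuous if $F(f)=f$; D-continuous if $F(D,\Omega,f)=f$ for every dense subset $D$ of $\Omega$ (with $f$ restricted to $D$); H-continuous if for every $g\in\mathbb{A}(\Omega)$ with $g(x)\subseteq f(x)$ for all $x\in\Omega$ one has $F(g)(x)=f(x)$ for all $x\in\Omega$. *)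

From HB Require Import structures.
From mathcomp Require Import all_boot all_order all_algebra.
From mathcomp Require Import all_classical all_reals all_analysis.
Set Implicit Arguments. Unset Strict Implicit. Unset Printing Implicit Defensive.
Import Order.TTheory GRing.Theory Num.Theory.
Import numFieldNormedType.Exports.
Local Open Scope classical_set_scope.
Local Open Scope ring_scope.

Record eitv (R : realType) := EItv {
  ilo : \bar R;
  ihi : \bar R;
  ilo_le_ihi : (ilo <= ihi)%E }.

Definition in_eitv (R : realType) (a : eitv R) (z : \bar R) : Prop :=
  (ilo a <= z)%E /\ (z <= ihi a)%E.

Definition Ball (R : realType) (n : nat) (Omega : set 'rV[R]_n)
  (x : 'rV[R]_n) (delta : R) : set 'rV[R]_n :=
  [set y | Omega y /\ `|x - y| < delta].

Definition vals (R : realType) (n : nat) (D Omega : set 'rV[R]_n)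
  (f : 'rV[R]_n -> eitv R) (x : 'rV[R]_n) (delta : R) : set (\bar R) :=
  [set z | exists y, (Ball Omega x delta `&` D) y /\ in_eitv (f y) z].

Definition Ilow (R : realType) (n : nat) (D Omega : set 'rV[R]_n)
  (f : 'rV[R]_n -> eitv R) (x : 'rV[R]_n) : \bar R :=
  ereal_sup [set ereal_inf (vals D Omega f x delta) | delta in [set d : R | 0 < d]].

Definition Supp (R : realType) (n : nat) (D Omega : set 'rV[R]_n)
  (f : 'rV[R]_n -> eitv R) (x : 'rV[R]_n) : \bar R :=
  ereal_inf [set ereal_sup (vals D Omega f x delta) | delta in [set d : R | 0 < d]].

(* F(D,Omega,g) = f on Omega, i.e. [I(D,Omega,g)(x), S(D,Omega,g)(x)] = f(x) for x in Omega *)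
Definition F_eq (R : realType) (n : nat) (D Omega : set 'rV[R]_n)
  (g f : 'rV[R]_n -> eitv R) : Prop :=
  forall x, Omega x -> Ilow D Omega g x = ilo (f x) /\ Supp D Omega g x = ihi (f x).

Definition dense_in (R : realType) (n : nat) (D Omega : set 'rV[R]_n) : Prop :=
  D `<=` Omega /\ Omega `<=` closure D.

Definition S_continuous (R : realType) (n : nat) (Omega : set 'rV[R]_n)
  (f : 'rV[R]_n -> eitv R) : Prop := F_eq Omega Omega f f.

Definition D_continuous (R : realType) (n : nat) (Omega : set 'rV[R]_n)
  (f : 'rV[R]_n -> eitv R) : Prop :=
  forall D : set 'rV[R]_n, dense_in D Omega -> F_eq D Omega f f.

Definition H_continuous (R : realType) (n : nat) (Omega : set 'rV[R]_n)
  (f : 'rV[R]_n -> eitv R) : Prop :=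
  forall g : 'rV[R]_n -> eitv R,
    (forall x, Omega x -> forall z, in_eitv (g x) z -> in_eitv (f x) z) ->
    F_eq Omega Omega g f.

From mathcomp Require Import all_boot all_order all_algebra.
From mathcomp Require Import all_classical all_reals all_analysis.
From mathcomp Require Import lra.
Set Implicit Arguments. Unset Strict Implicit. Unset Printing Implicit Defensive.
Import numFieldNormedType.Exports.
Import Order.TTheory GRing.Theory Num.Theory.
Local Open Scope classical_set_scope.
Local Open Scope ring_scope.

(* Taking D = Omega shows that D-continuity implies S-continuity, and taking
   g = f that H-continuity implies S-continuity. Now let f be H-continuous and
   D dense. As D is a subset of Omega, I(D,f) >= I(f) and S(D,f) <= S(f).
   Conversely, let g agree with f on D and be the single point S(f)(y) off D;
   H-continuity gives I(g)(x) = I(f)(x). Every y near x has points of D nearer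
   still, so the infimum of f over D near x is at most S(D,f)(y) <= S(f)(y),
   the value of g at y; hence I(D,f)(x) <= I(g)(x). The bound for S is dual. *)

Section EItv.
Variable R : realType.
Implicit Types (a : eitv R) (c z : \bar R).

Definition eitv_pt c : eitv R := EItv (lexx c).

Lemma in_eitv_ilo a : in_eitv a (ilo a).
Proof. by split => //; exact: ilo_le_ihi. Qed.

Lemma in_eitv_ihi a : in_eitv a (ihi a).
Proof. by split => //; exact: ilo_le_ihi. Qed.

Lemma in_eitv_ptE c z : in_eitv (eitv_pt c) z -> z = c.
Proof. by case=> /= h1 h2; apply/le_anti; rewrite h1 h2. Qed.

End EItv.

Section Envelopes.
Variables (R : realType) (n : nat) (Omega : set 'rV[R]_n).
Implicit Types (D : set 'rV[R]_n) (f g : 'rV[R]_n -> eitv R) (x y : 'rV[R]_n).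

Lemma dense_in_refl : dense_in Omega Omega.
Proof. by split => //; exact: subset_closure. Qed.

Lemma vals_subset D D' f x d :
  D `<=` D' -> vals D Omega f x d `<=` vals D' Omega f x d.
Proof.
by move=> DD' z [y [[Bxy Dy] fyz]]; exists y; split => //; split => //; exact: DD'.
Qed.

Lemma le_Ilow_subset D D' f x :
  D `<=` D' -> (Ilow D' Omega f x <= Ilow D Omega f x)%E.
Proof.
move=> DD'; apply: ge_ereal_sup => _ [d d0 <-].
apply: le_trans (ereal_sup_ubound _); last by exists d.
exact/ereal_inf_le_tmp/vals_subset.
Qed.

Lemma le_Supp_subset D D' f x :
  D `<=` D' -> (Supp D Omega f x <= Supp D' Omega f x)%E.
Proof.
move=> DD'; apply: le_ereal_inf_tmp => _ [d d0 <-].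
apply: (@le_trans _ _ (ereal_sup (vals D Omega f x d))).
  by apply: ereal_inf_lbound; exists d.
exact/ereal_sup_le/vals_subset.
Qed.

Lemma dense_ball_meet D x y d e :
  dense_in D Omega -> Ball Omega x d y -> 0 < e ->
  exists2 w, (Ball Omega x d `&` D) w & (Ball Omega y e `&` D) w.
Proof.
move=> [DO OD] [Oy xy] e0.
have r0 : 0 < Order.min e (d - `|x - y|) by rewrite lt_min e0 subr_gt0.
have [w [Dw]] := OD y Oy _ (nbhsx_ballx y _ r0).
rewrite -ball_normE /= lt_min => /andP[yw_e yw_d].
have Ow := DO w Dw.
exists w; split => //; split => //.
by have := ler_distD y x w; lra.
Qed.

Lemma inf_vals_le_Supp D f x y d :
  dense_in D Omega -> Ball Omega x d y ->
  (ereal_inf (vals D Omega f x d) <= Supp D Omega f y)%E.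
Proof.
move=> dD Bxy; apply: le_ereal_inf_tmp => _ [e e0 <-].
have [w Bxw Byw] := dense_ball_meet dD Bxy e0.
apply: (@le_trans _ _ (ilo (f w))).
  by apply: ereal_inf_lbound; exists w; split => //; exact: in_eitv_ilo.
by apply: ereal_sup_ubound; exists w; split => //; exact: in_eitv_ilo.
Qed.

Lemma Ilow_le_sup_vals D f x y d :
  dense_in D Omega -> Ball Omega x d y ->
  (Ilow D Omega f y <= ereal_sup (vals D Omega f x d))%E.
Proof.
move=> dD Bxy; apply: ge_ereal_sup => _ [e e0 <-].
have [w Bxw Byw] := dense_ball_meet dD Bxy e0.
apply: (@le_trans _ _ (ilo (f w))).
  by apply: ereal_inf_lbound; exists w; split => //; exact: in_eitv_ilo.
by apply: ereal_sup_ubound; exists w; split => //; exact: in_eitv_ilo.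
Qed.

Lemma le_Ilow_patch D f g x :
  dense_in D Omega -> (forall y, D y -> g y = f y) ->
  (forall y, Omega y -> ~ D y -> (Supp D Omega f y <= ilo (g y))%E) ->
  (Ilow D Omega f x <= Ilow Omega Omega g x)%E.
Proof.
move=> dD gDf gnD; apply: ge_ereal_sup => _ [d d0 <-].
apply: le_trans (ereal_sup_ubound _); last by exists d.
apply: le_ereal_inf_tmp => z [y [[Bxy Oy] gyz]].
have [Dy|nDy] := pselect (D y).
  by apply: ereal_inf_lbound; exists y; rewrite -gDf.
apply: le_trans (inf_vals_le_Supp f dD Bxy) _.
exact: le_trans (gnD y Oy nDy) gyz.1.
Qed.

Lemma le_Supp_patch D f g x :
  dense_in D Omega -> (forall y, D y -> g y = f y) ->
  (forall y, Omega y -> ~ D y -> (ihi (g y) <= Ilow D Omega f y)%E) ->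
  (Supp Omega Omega g x <= Supp D Omega f x)%E.
Proof.
move=> dD gDf gnD; apply: le_ereal_inf_tmp => _ [d d0 <-].
apply: (@le_trans _ _ (ereal_sup (vals Omega Omega g x d))).
  by apply: ereal_inf_lbound; exists d.
apply: ge_ereal_sup => z [y [[Bxy Oy] gyz]].
have [Dy|nDy] := pselect (D y).
  by apply: ereal_sup_ubound; exists y; rewrite -gDf.
apply: le_trans _ (Ilow_le_sup_vals f dD Bxy).
exact: le_trans gyz.2 (gnD y Oy nDy).
Qed.

Definition patch D f (h : 'rV[R]_n -> \bar R) y : eitv R :=
  if pselect (D y) then f y else eitv_pt (h y).

Lemma patch_in D f h y : D y -> patch D f h y = f y.
Proof. by rewrite /patch; case: pselect. Qed.

Lemma patch_out D f h y : ~ D y -> patch D f h y = eitv_pt (h y).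
Proof. by rewrite /patch; case: pselect. Qed.

Lemma patch_sub D f h :
  (forall y, in_eitv (f y) (h y)) ->
  forall y, Omega y -> forall z, in_eitv (patch D f h y) z -> in_eitv (f y) z.
Proof.
move=> fh y _ z; have [Dy|nDy] := pselect (D y); first by rewrite patch_in.
by rewrite patch_out // => /in_eitv_ptE ->.
Qed.

Lemma H_S_continuous f : H_continuous Omega f -> S_continuous Omega f.
Proof. by move=> Hf; apply: Hf. Qed.

Lemma H_continuous_Ilow_dense D f x :
  H_continuous Omega f -> dense_in D Omega -> Omega x ->
  Ilow D Omega f x = ilo (f x).
Proof.
move=> Hf dD Ox; have Sf := H_S_continuous Hf; have [DO _] := dD.
apply/le_anti/andP; split; last first.
  by have [<- _] := Sf x Ox; exact: le_Ilow_subset.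
have fS y : in_eitv (f y) (ihi (f y)) by exact: in_eitv_ihi.
have [<- _] := Hf _ (patch_sub (D := D) fS) x Ox.
apply: le_Ilow_patch => // [y|y Oy nDy]; first exact: patch_in.
rewrite patch_out //=; have [_ <-] := Sf y Oy.
exact: le_Supp_subset.
Qed.

Lemma H_continuous_Supp_dense D f x :
  H_continuous Omega f -> dense_in D Omega -> Omega x ->
  Supp D Omega f x = ihi (f x).
Proof.
move=> Hf dD Ox; have Sf := H_S_continuous Hf; have [DO _] := dD.
apply/le_anti/andP; split.
  by have [_ <-] := Sf x Ox; exact: le_Supp_subset.
have fI y : in_eitv (f y) (ilo (f y)) by exact: in_eitv_ilo.
have [_ <-] := Hf _ (patch_sub (D := D) fI) x Ox.
apply: le_Supp_patch => // [y|y Oy nDy]; first exact: patch_in.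
rewrite patch_out //=; have [<- _] := Sf y Oy.
exact: le_Ilow_subset.
Qed.

End Envelopes.

Theorem theorem1 (R : realType) (n : nat) (Omega : set 'rV[R]_n)
  (f : 'rV[R]_n -> eitv R) :
  open Omega ->
  (H_continuous Omega f -> D_continuous Omega f) /\
  (D_continuous Omega f -> S_continuous Omega f).
Proof.
move=> _; split => [Hf D dD x Ox | Df]; last exact: Df _ (dense_in_refl Omega).
by split; [exact: H_continuous_Ilow_dense | exact: H_continuous_Supp_dense].
Qed.
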